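(* Let $R$ be a semiprime ring which is both $2$-torsion free and $3$-torsion free, and let $T:R\to R$ be an additive map such that $T(x)x^3=0$ and $T(x^4)=0$ for all $x\in R$. Then $T(xy)=T(x)y$ for all $x,y\in R$.
   Context: $R$ is an associative ring. $R$ is $k$-torsion free if $kx=0$ implies $x=0$ for all $x\in R$. $R$ is semiprime if $aRa=\{0\}$ implies $a=0$. *)

From mathcomp Require Import all_boot all_algebra.
Set Implicit Arguments. Unset Strict Implicit. Unset Printing Implicit Defensive.
Import GRing.Theory.
Local Open Scope ring_scope.

Definition assoc_ring_mul (V : zmodType) (mul : V -> V -> V) : Prop :=
  [/\ forall x y z, mul x (mul y z) = mul (mul x y) z,
      forall x y z, mul x (y + z) = mul x y + mul x z &
      forall x y z, mul (x + y) z = mul x z + mul y z].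

Definition torsion_free (V : zmodType) (k : nat) : Prop :=
  forall x : V, x *+ k = 0 -> x = 0.

Definition semiprime (V : zmodType) (mul : V -> V -> V) : Prop :=
  forall a : V, (forall r : V, mul (mul a r) a = 0) -> a = 0.

Definition additive_map (V : zmodType) (T : V -> V) : Prop :=
  forall x y, T (x + y) = T x + T y.

(* Fix x and write a = T(x).  Linearizing T(x) x^3 = 0 gives
   T(y) x^3 + a (y x^2 + x y x + x^2 y) = 0, and together with the linearization
   of T(x^4) = 0 this yields a x^i R x^j = 0 whenever i + j >= 7.  Semiprimeness
   then lowers i + j step by step: writing b = a x^i w x^j as one term of the
   linearized identity (with y and a right power of x chosen suitably), the other
   terms are annihilated by b R on the left, so b R b = 0 and b = 0.  Descending
   to i + j = 2 gives a x^2 = 0; repeating the descent with the linearizations of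
   T(x) x^2 = 0 and T(x) x = 0 gives T(x) = 0, so T(xy) = 0 = T(x) y. *)

From mathcomp Require Import all_boot all_algebra zify.
Set Implicit Arguments. Unset Strict Implicit. Unset Printing Implicit Defensive.
Import GRing.Theory.
Local Open Scope ring_scope.

Inductive zexpr := ZAtom of nat | ZZero | ZAdd of zexpr & zexpr | ZOpp of zexpr
  | ZMulz of zexpr & int.

Fixpoint zeval (V : zmodType) (env : seq V) (e : zexpr) : V :=
  match e with
  | ZAtom i => env`_i
  | ZZero => 0
  | ZAdd e1 e2 => zeval env e1 + zeval env e2
  | ZOpp e1 => - zeval env e1
  | ZMulz e1 c => zeval env e1 *~ c
  end.

Fixpoint zcoef (e : zexpr) (i : nat) : int :=
  match e with
  | ZAtom j => (i == j)%:Z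
  | ZZero => 0
  | ZAdd e1 e2 => zcoef e1 i + zcoef e2 i
  | ZOpp e1 => - zcoef e1 i
  | ZMulz e1 c => zcoef e1 i * c
  end.

Lemma zeval_coef (V : zmodType) (env : seq V) e :
  zeval env e = \sum_(i < size env) env`_i *~ zcoef e i.
Proof.
elim: e => [j||e1 IH1 e2 IH2|e1 IH1|e1 IH1 c] /=.
- case: (ltnP j (size env)) => [lt_j|le_j].
    rewrite (bigD1 (Ordinal lt_j)) //= eqxx big1 ?addr0 // => i.
    by rewrite -val_eqE /= => /negPf ->.
  rewrite nth_default // big1 // => i _.
  by rewrite ltn_eqF // (leq_trans (ltn_ord i)).
- by rewrite big1 // => i _; rewrite mulr0z.
- by rewrite IH1 IH2 -big_split; apply: eq_bigr => i _; rewrite mulrzDr.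
- by rewrite IH1 -sumrN; apply: eq_bigr => i _; rewrite mulrNz.
- by rewrite IH1 mulrz_suml; apply: eq_bigr => i _; rewrite mulrzA.
Qed.

Lemma zeval_eq (V : zmodType) (env : seq V) e1 e2 :
  all (fun i => zcoef e1 i == zcoef e2 i) (iota 0 (size env)) ->
  zeval env e1 = zeval env e2.
Proof.
move=> /allP same; rewrite !zeval_coef; apply: eq_bigr => i _.
by rewrite (eqP (same i _)) // mem_iota /= ltn_ord.
Qed.

Ltac zmem t env :=
  lazymatch env with
  | t :: _ => constr:(true)
  | _ :: ?env' => zmem t env'
  | _ => constr:(false)
  end.

Ltac zatoms t env :=
  lazymatch t with
  | @GRing.add _ ?a ?b => let env := zatoms a env in zatoms b env
  | @GRing.opp _ ?a => zatoms a env
  | @GRing.zero _ => env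
  | @intmul _ ?a _ => zatoms a env
  | @GRing.natmul _ ?a _ => zatoms a env
  | _ => lazymatch zmem t env with
         | true => env
         | false => constr:(t :: env)
         end
  end.

Ltac zindex t env :=
  lazymatch env with
  | t :: _ => constr:(0%N)
  | _ :: ?env' => let i := zindex t env' in constr:(i.+1)
  end.

Ltac zreify t env :=
  lazymatch t with
  | @GRing.add _ ?a ?b => let a' := zreify a env in let b' := zreify b env in constr:(ZAdd a' b')
  | @GRing.opp _ ?a => let a' := zreify a env in constr:(ZOpp a')
  | @GRing.zero _ => constr:(ZZero)
  | @intmul _ ?a ?c => let a' := zreify a env in constr:(ZMulz a' c)
  | @GRing.natmul _ ?a ?n => let a' := zreify a env in constr:(ZMulz a' (Posz n))
  | _ => let i := zindex t env in constr:(ZAtom i)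
  end.

Ltac abel :=
  lazymatch goal with
  | |- @eq ?V ?l ?r =>
    let env := zatoms l (@nil V) in
    let env := zatoms r env in
    let l' := zreify l env in
    let r' := zreify r env in
    change (zeval env l' = zeval env r'); apply: zeval_eq; vm_compute; reflexivity
  end.

Lemma subr_mulz0 (V : zmodType) (c : int) (h l r : V) :
  h = 0 -> l - h *~ c = r -> l = r.
Proof. by move=> ->; rewrite mul0rz subr0. Qed.

Ltac subtract h c := apply: (subr_mulz0 (c := c) h).

Lemma torsion_free_mul (V : zmodType) m n :
  torsion_free V m -> torsion_free V n -> torsion_free V (m * n).
Proof. by move=> tf_m tf_n x; rewrite mulnC mulrnA => /tf_m /tf_n. Qed.

Section AdditiveMap.
Variables (V : zmodType) (f : V -> V).
Hypothesis fD : additive_map f.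

Lemma additive_map0 : f 0 = 0.
Proof. by apply: (@addrI _ (f 0)); rewrite -fD !addr0. Qed.

Lemma additive_mapN x : f (- x) = - f x.
Proof. by apply: (@addrI _ (f x)); rewrite -fD !subrr additive_map0. Qed.

Lemma additive_map_iter n : additive_map (iter n f).
Proof. by elim: n => [|n IHn] x y //=; rewrite IHn fD. Qed.

Lemma additive_map_sum I r (P : pred I) (F : I -> V) :
  f (\sum_(i <- r | P i) F i) = \sum_(i <- r | P i) f (F i).
Proof. exact: (big_morph f fD additive_map0). Qed.

End AdditiveMap.

Section NonunitalRing.
Variables (V : zmodType) (mul : V -> V -> V).
Local Infix "**" := mul (at level 40, left associativity).
Hypothesis mulA : forall x y z, x ** (y ** z) = x ** y ** z.
Hypothesis mulDr : forall x y z, x ** (y + z) = x ** y + x ** z.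
Hypothesis mulDl : forall x y z, (x + y) ** z = x ** z + y ** z.

Lemma mul0x y : 0 ** y = 0.
Proof. exact: (@additive_map0 _ (mul^~ y) (fun a b => mulDl a b y)). Qed.

Lemma mulx0 x : x ** 0 = 0.
Proof. exact: (additive_map0 (mulDr x)). Qed.

Lemma mulNx x y : (- x) ** y = - (x ** y).
Proof. exact: (@additive_mapN _ (mul^~ y) (fun a b => mulDl a b y)). Qed.

Lemma mulxN x y : x ** (- y) = - (x ** y).
Proof. exact: (additive_mapN (mulDr x)). Qed.

Lemma mul_eq0x h y : h = 0 -> h ** y = 0.
Proof. by move->; rewrite mul0x. Qed.

(* x^i w and w x^j: without a unit, powers of x only make sense acting on w. *)
Definition lpow x i w := iter i (mul x) w.
Definition rpow x j w := iter j (mul^~ x) w.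

Section Powers.
Variable x : V.

Lemma lpowD i i' w : lpow x (i + i') w = lpow x i (lpow x i' w).
Proof. exact: iterD. Qed.

Lemma rpowD j j' w : rpow x (j + j') w = rpow x j (rpow x j' w).
Proof. exact: iterD. Qed.

Lemma lpowM i u v : lpow x i u ** v = lpow x i (u ** v).
Proof. by elim: i => //= i <-; rewrite mulA. Qed.

Lemma rpowM j u v : u ** rpow x j v = rpow x j (u ** v).
Proof. by elim: j => //= j <-; rewrite mulA. Qed.

Lemma lpow_rpow i j w : lpow x i (rpow x j w) = rpow x j (lpow x i w).
Proof. by elim: i => //= i ->; rewrite rpowM. Qed.

Lemma rpow_additive j : additive_map (rpow x j).
Proof. exact: additive_map_iter. Qed.

End Powers.

Section Descent.
Variable T : V -> V.
Hypothesis TD : additive_map T.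
Hypothesis semiprime_mul : semiprime mul.

Lemma annihilator_eq0 c : (forall w, c ** w = 0) -> c = 0.
Proof. by move=> c0; apply: semiprime_mul => r; rewrite -mulA c0. Qed.

Definition vanishes x i j := forall w, T x ** rpow x j (lpow x i w) = 0.

Lemma vanishes_mono x i j i' j' :
  (i <= i')%N -> (j <= j')%N -> vanishes x i j -> vanishes x i' j'.
Proof.
move=> /subnKC <- /subnKC <- van w.
by rewrite lpowD addnC rpowD rpowM van (additive_map0 (rpow_additive _ _)).
Qed.

Lemma vanishes_mul x i l u v :
  vanishes x i l -> T x ** lpow x i u ** rpow x l v = 0.
Proof. by move=> van; rewrite -mulA lpowM rpowM lpow_rpow. Qed.

Definition linearized n x := forall y,
  rpow x n.+1 (T y) + \sum_(p < n.+1) T x ** rpow x (n - p) (lpow x p y) = 0.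

Lemma vanishes_step n x i j :
  linearized n x -> (n <= i + j)%N -> vanishes x i j.+1 ->
  (forall d, (0 < d <= j)%N -> vanishes x (i + d) (j - d)) -> vanishes x i j.
Proof.
move=> lin le_n_ij van_r van_d w; set b := T x ** rpow x j (lpow x i w).
apply: semiprime_mul => r.
(* b is the p0-th term of (lin y) x^m; b r kills all the other terms. *)
pose p0 := minn i n; have lt_p0 : (p0 < n.+1)%N by rewrite ltnS geq_minr.
pose m := (j - (n - p0))%N; pose y := lpow x (i - p0) w.
have kill l v : (j < l)%N -> b ** r ** rpow x l v = 0.
  move=> lt_jl; rewrite /b -lpow_rpow -(mulA (T x)) lpowM.
  exact/vanishes_mul/(vanishes_mono (leqnn i) lt_jl van_r).
have termE p : rpow x m (T x ** rpow x (n - p) (lpow x p y))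
               = T x ** rpow x (m + (n - p)) (lpow x (p + (i - p0)) w).
  by rewrite -rpowM rpowD lpowD.
have := congr1 (fun v => b ** r ** rpow x m v) (lin y).
cbv beta; rewrite (additive_map0 (rpow_additive _ _)) mulx0 rpow_additive mulDr.
rewrite -rpowD kill ?add0r; last by rewrite /m /p0; lia.
rewrite (additive_map_sum (rpow_additive x m)) (additive_map_sum (mulDr _)).
rewrite (bigD1 (Ordinal lt_p0)) //= big1 ?addr0 => [|p ne_p_p0].
  rewrite termE; have -> : (m + (n - p0) = j)%N by rewrite /m /p0; lia.
  by rewrite subnKC // geq_minl.
have lt_pn := ltn_ord p; rewrite termE.
case: (ltngtP p p0) => [lt_p_p0|lt_p0_p|eq_p_p0].
- by rewrite rpowM kill // /m /p0; lia.
- have -> : (m + (n - p) = j - (p - p0))%N by rewrite /m /p0; lia.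
  have -> : (p + (i - p0) = i + (p - p0))%N by rewrite /p0; lia.
  by rewrite van_d ?mulx0 // /p0; lia.
- by rewrite -val_eqE /= eq_p_p0 eqxx in ne_p_p0.
Qed.

Lemma vanishes_descent n x N :
  linearized n x -> (forall i j, (N <= i + j)%N -> vanishes x i j) ->
  forall i j, (n <= i + j)%N -> vanishes x i j.
Proof.
move=> lin vanN; suff van_d d i j : (N <= i + j + d)%N -> (n <= i + j)%N -> vanishes x i j.
  by move=> i j; apply: (van_d N); lia.
(* Downward induction on i + j, and for a fixed i + j, strong induction on j. *)
elim: d i j => [|d IHd] i j le_N le_n; first by apply: vanN; rewrite addn0 in le_N.
have [le_N'|lt_N] := leqP N (i + j + d); first exact: IHd le_N' le_n.
elim/ltn_ind: j i le_N le_n lt_N => j IHj i le_N le_n lt_N.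
apply: (vanishes_step lin le_n); first by apply: IHd; lia.
by move=> e /andP[e_gt0 le_ej]; apply: IHj; lia.
Qed.

Lemma vanishes_pow n x : vanishes x n.+1 0 -> T x ** lpow x n x = 0.
Proof.
move=> van; apply: annihilator_eq0 => w.
by rewrite -mulA lpowM /lpow -iterSr; apply: van.
Qed.

Lemma vanishes00 x : vanishes x 0 0 -> T x = 0.
Proof. exact: annihilator_eq0. Qed.

Ltac expand :=
  repeat progress rewrite ?mulDl ?mulDr ?mulNx ?mulxN ?mul0x ?mulx0
                          ?TD ?(additive_mapN TD) ?(additive_map0 TD) ?mulA.

Lemma linearized0 x : (forall z, T z ** z = 0) -> linearized 0 x.
Proof.
move=> Tlin y; rewrite big_ord_recr big_ord0 /=.
subtract (Tlin (x + y)) 1%Z; subtract (Tlin x) (-1)%Z; subtract (Tlin y) (-1)%Z.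
by expand; abel.
Qed.

Section TorsionFree.
Hypothesis torsion2 : torsion_free V 2.
Hypothesis torsion3 : torsion_free V 3.

Lemma linearized1 x : (forall z, T z ** (z ** z) = 0) -> linearized 1 x.
Proof.
move=> Tsquare y; rewrite !big_ord_recr big_ord0 /=; apply: torsion2.
subtract (Tsquare (x + y)) 1%Z; subtract (Tsquare (x - y)) (-1)%Z; subtract (Tsquare y) (-2)%Z.
by expand; abel.
Qed.

Hypothesis Tcube : forall x, T x ** (x ** (x ** x)) = 0.
Hypothesis T_fourth : forall x, T (x ** (x ** (x ** x))) = 0.

(* If q(x + t y) = q(x) + t D + t^2 D2 + t^3 D3 + t^4 q(y), then
   6 D = 6 q(x + y) - 2 q(x - y) - q(x + 2 y) - 3 q(x) + 12 q(y). *)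
Lemma Tcube_linear x y :
  T y ** x ** x ** x + T x ** y ** x ** x + T x ** x ** y ** x + T x ** x ** x ** y = 0.
Proof.
apply: (torsion_free_mul torsion2 torsion3).
subtract (Tcube (x + y)) 6%Z; subtract (Tcube (x - y)) (-2)%Z.
subtract (Tcube (x + (y + y))) (-1)%Z; subtract (Tcube x) (-3)%Z; subtract (Tcube y) 12%Z.
by expand; abel.
Qed.

Lemma T_fourth_linear x y :
  T (y ** x ** x ** x + x ** y ** x ** x + x ** x ** y ** x + x ** x ** x ** y) = 0.
Proof.
apply: (torsion_free_mul torsion2 torsion3).
subtract (T_fourth (x + y)) 6%Z; subtract (T_fourth (x - y)) (-2)%Z.
subtract (T_fourth (x + (y + y))) (-1)%Z; subtract (T_fourth x) (-3)%Z; subtract (T_fourth y) 12%Z.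
by expand; abel.
Qed.

Lemma Tcube_mulr x v : T x ** x ** x ** x ** v = 0.
Proof. by rewrite (_ : T x ** x ** x ** x = 0) ?mul0x // -!mulA Tcube. Qed.

(* (T_fourth_linear x w) x^3, with each T(u) x^3 rewritten by Tcube_linear. *)
Lemma Tcube_T_fourth x w : T x ** w ** x ** x ** x ** x ** x
  + (T x ** x ** w ** x ** x ** x ** x) *~ 2 + (T x ** x ** x ** w ** x ** x ** x) *~ 3 = 0.
Proof.
subtract (mul_eq0x (x ** x ** x) (T_fourth_linear x w)) (-1)%Z.
subtract (Tcube_linear x (w ** x ** x ** x)) 1%Z; subtract (Tcube_linear x (x ** w ** x ** x)) 1%Z.
subtract (Tcube_linear x (x ** x ** w ** x)) 1%Z; subtract (Tcube_linear x (x ** x ** x ** w)) 1%Z.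
subtract (Tcube_mulr x (w ** x ** x)) (-3)%Z; subtract (Tcube_mulr x (x ** w ** x)) (-2)%Z.
subtract (Tcube_mulr x (x ** x ** w)) (-1)%Z.
by expand; abel.
Qed.

Lemma vanishes_base x i j : (7 <= i + j)%N -> vanishes x i j.
Proof.
have van30 : vanishes x 3 0 by move=> w; rewrite /= !mulA Tcube_mulr.
have van25 : vanishes x 2 5.
  move=> w; subtract (Tcube_T_fourth x (x ** x ** w)) 1%Z.
  subtract (Tcube_mulr x (w ** x ** x ** x ** x)) (-2)%Z.
  subtract (Tcube_mulr x (x ** w ** x ** x ** x)) (-3)%Z.
  by rewrite /lpow /rpow /=; expand; abel.
have van16 : vanishes x 1 6.
  move=> w; subtract (mul_eq0x x (Tcube_T_fourth x (x ** w))) 1%Z.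
  subtract (van25 w) (-2)%Z; subtract (Tcube_mulr x (w ** x ** x ** x ** x)) (-3)%Z.
  by rewrite /lpow /rpow /=; expand; abel.
have van07 : vanishes x 0 7.
  move=> w; subtract (mul_eq0x (x ** x) (Tcube_T_fourth x w)) 1%Z.
  subtract (van16 w) (-2)%Z; subtract (van25 w) (-3)%Z.
  by rewrite /lpow /rpow /=; expand; abel.
case: i => [|[|[|i]]] le7.
- exact: vanishes_mono van07.
- exact: vanishes_mono van16.
- exact: vanishes_mono van25.
- by apply: vanishes_mono van30; lia.
Qed.

Lemma linearized2 x : linearized 2 x.
Proof.
move=> y; rewrite !big_ord_recr big_ord0 /=.
by subtract (Tcube_linear x y) 1%Z; expand; abel.
Qed.

Lemma T_eq0 x : T x = 0.
Proof.
have van2 z : forall i j, (2 <= i + j)%N -> vanishes z i j.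
  exact: vanishes_descent (linearized2 z) (vanishes_base z).
have van1 z : forall i j, (1 <= i + j)%N -> vanishes z i j.
  exact: vanishes_descent (linearized1 z (fun y => vanishes_pow (van2 y 2 0 isT))) (van2 z).
have van0 : vanishes x 0 0.
  exact: vanishes_descent (linearized0 x (fun y => vanishes_pow (van1 y 1 0 isT))) (van1 x) 0 0 isT.
exact: vanishes00.
Qed.

End TorsionFree.
End Descent.
End NonunitalRing.

Theorem lemma2p5 (V : zmodType) (mul : V -> V -> V) (T : V -> V) :
  assoc_ring_mul mul ->
  semiprime mul ->
  torsion_free V 2 ->
  torsion_free V 3 ->
  additive_map T ->
  (forall x, mul (T x) (mul x (mul x x)) = 0) ->
  (forall x, T (mul x (mul x (mul x x))) = 0) ->
  forall x y, T (mul x y) = mul (T x) y.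
Proof.
move=> [mulA mulDr mulDl] semiprime_mul tf2 tf3 TD Tcube T_fourth x y.
have T0 := T_eq0 mulA mulDr mulDl TD semiprime_mul tf2 tf3 Tcube T_fourth.
by rewrite !T0 mul0x.
Qed.
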